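(* Let $p\ge 1$ be an integer. Then $\lambda_{\min}(\mathcal U'(p)^c)$ is the least real root of the polynomial $$g(\lambda;p)=(-4+2p)+(3-5p)\lambda+(6-p)\lambda^2+(1+4p)\lambda^3+(-2+p)\lambda^4-\lambda^5 .$$
   Context: All graphs are simple and finite. For a graph $G$, $\lambda_{\min}(G)$ denotes the least eigenvalue of the adjacency matrix $A(G)$, and $G^c$ denotes the complement of $G$. $K_{1,p}$ is the star with $p$ edges, whose degree-one vertices are called pendant vertices. For an integer $p\ge 1$, $\mathcal U'(p)$ is the graph of order $p+4$ obtained from disjoint copies of $K_{1,p}$ and the triangle $C_3$ by adding one edge joining a pendant vertex of $K_{1,p}$ to a vertex of $C_3$. *)

From HB Require Import structures.
From mathcomp Require Import all_boot all_order all_algebra.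
Set Implicit Arguments. Unset Strict Implicit. Unset Printing Implicit Defensive.
Import Order.TTheory GRing.Theory Num.Theory.
Local Open Scope ring_scope.

Definition adj_mx (R : nzRingType) (n : nat) (e : rel 'I_n) : 'M[R]_n :=
  \matrix_(i, j) (e i j)%:R.

Definition compl_graph (n : nat) (e : rel 'I_n) : rel 'I_n :=
  fun i j => (i != j) && ~~ e i j.

(* The graph U'(p) on vertices 0..p+3:
   0 = centre of K_{1,p}; 1..p = pendant vertices of K_{1,p};
   p+1, p+2, p+3 = triangle C_3; extra edge {1, p+1}. *)
Definition Uprime_edge0 (p i j : nat) : bool :=
  [|| (i == 0)%N && (1 <= j <= p)%N,
      [&& (p.+1 <= i)%N, (p.+1 <= j)%N, (i <= p + 3)%N, (j <= p + 3)%N & i != j]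
    | (i == 1)%N && (j == p.+1)%N ].

Definition Uprime (p : nat) : rel 'I_(p + 4) :=
  fun i j => Uprime_edge0 p i j || Uprime_edge0 p j i.

Definition is_lambda_min (R : rcfType) (n : nat) (A : 'M[R]_n) (x : R) : Prop :=
  eigenvalue A x /\ forall y : R, eigenvalue A y -> x <= y.

Definition is_least_root (R : rcfType) (q : {poly R}) (x : R) : Prop :=
  root q x /\ forall y : R, root q y -> x <= y.

Definition gpoly (R : rcfType) (p : nat) : {poly R} :=
  let P : R := p%:R in
    ((-4) + 2 * P)%:P
  + (3 - 5 * P)%:P * 'X
  + (6 - P)%:P * 'X^2
  + (1 + 4 * P)%:P * 'X^3
  + ((-2) + P)%:P * 'X^4
  - 'X^5.

Arguments Uprime p : clear implicits.

From HB Require Import structures.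
From mathcomp Require Import all_boot all_order all_algebra zify ring lra.
From mathcomp Require Import polyrcf.
Import Order.TTheory GRing.Theory Num.Theory.
Set Implicit Arguments. Unset Strict Implicit. Unset Printing Implicit Defensive.
Local Open Scope ring_scope.

(* Vertices of U'(p) are 0 (centre of the star), 1 (the pendant joined to the
   triangle), 2..p (the other pendants), p+1 (the triangle vertex joined to 1)
   and p+2, p+3 (the remaining triangle vertices).  These five classes form an
   equitable partition of the complement graph: lifting a vector indexed by
   the classes to the vertices intertwines the adjacency matrix of U'(p)^c
   with a 5x5 quotient matrix Q (lift_mul_compl), and det (Q - y) = g(y)
   (det_quot, by Laplace expansion).  Hence every root of g is an eigenvalue
   of U'(p)^c, and conversely every eigenvalue y < -2 is a root of g, since an
   eigenvector for such y is constant on each class (y <> -1 equalizes the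
   pendants 2..p, y <> 0 equalizes p+2 and p+3).  Finally g(-5) > 0 > g(-2),
   so the least root of g lies below -2 and is the least eigenvalue. *)

Lemma adj_compl (R : nzRingType) n (e : rel 'I_n) : irreflexive e ->
  adj_mx R (compl_graph e) = const_mx 1 - 1%:M - adj_mx R e.
Proof.
move=> irr_e; apply/matrixP => i j; rewrite !mxE /compl_graph.
have [<-|_] := eqVneq i j; first by rewrite irr_e subrr subr0.
by case: (e i j); rewrite /= ?subr0 ?subrr.
Qed.

Lemma row_mul_adj_nbrs (R : nzRingType) n (e : rel 'I_n) (F : nat -> R)
    (N : seq nat) (j : 'I_n) :
  uniq N -> all (gtn n) N -> (forall i : 'I_n, e i j = ((i : nat) \in N)) ->
  (\row_(i < n) F i *m adj_mx R e) 0 j = \sum_(k <- N) F k.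
Proof.
move=> uN N_lt eN; rewrite !mxE.
transitivity (\sum_(i < n | val i \in N) F i).
  rewrite [RHS]big_mkcond; apply: eq_bigr => i _; rewrite !mxE eN.
  by case: (_ \in _); rewrite ?mulr1 ?mulr0.
rewrite -(big_mkord (mem N) F) -big_filter.
apply: perm_big; apply: uniq_perm; rewrite ?filter_uniq ?iota_uniq // => k.
rewrite mem_filter mem_index_iota /=.
by apply/idP/idP => [/andP[]//|kN]; apply/andP; split=> //; apply: (allP N_lt).
Qed.

Lemma row_natfun (R : nzRingType) n (v : 'rV[R]_n) :
  exists F : nat -> R, v = \row_(i < n) F i.
Proof.
exists (fun k => if insub k is Some i then v 0 i else 0).
by apply/rowP => i; rewrite mxE valK.
Qed.

(* Laplace expansion along the first row, for matrices given by their list of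
   rows; minors are again lists, so concrete determinants compute by rewriting. *)
Definition seqmx (R : nzRingType) n (s : seq (seq R)) : 'M[R]_n :=
  \matrix_(i, j) nth 0 (nth [::] s i) j.

Definition minor_seq (R : nzRingType) n (s : seq (seq R)) (j : nat) : seq (seq R) :=
  mkseq (fun i => mkseq (fun k => nth 0 (nth [::] s i.+1) (bump j k)) n) n.

Lemma det_seqmx (R : comNzRingType) n (s : seq (seq R)) :
  \det (seqmx n.+1 s) =
  \sum_(j < n.+1) nth 0 (nth [::] s 0) j * ((-1) ^+ j * \det (seqmx n (minor_seq n s j))).
Proof.
rewrite (expand_det_row _ 0); apply: eq_bigr => j _.
rewrite mxE /cofactor; congr (_ * (_ * \det _)); apply/matrixP => i k.
by rewrite !mxE !nth_mkseq.
Qed.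

(* A nonzero polynomial over a real closed field that has a root has a least
   root: the head of the sorted list of its roots. *)
Lemma least_root_exists (R : rcfType) (q : {poly R}) (z : R) :
  q != 0 -> root q z -> exists x, is_least_root q x.
Proof.
move=> q0 rz; have mem_roots y : (y \in rootsR q) = root q y.
  by rewrite -(roots_on_rootsR q0) in_itv.
have := sorted_roots (- cauchy_bound q) (cauchy_bound q) q.
rewrite -/(rootsR q); case E : (rootsR q) => [|x s] sorted_xs.
  by move: rz; rewrite -mem_roots E.
exists x; split; first by rewrite -mem_roots E mem_head.
move=> y; rewrite -mem_roots E inE => /orP[/eqP -> //|ys].
by have /allP /(_ y ys) /ltW := order_path_min lt_trans sorted_xs.
Qed.
Definition part (p k : nat) : nat :=
  if k == 0%N then 0 else if k == 1%N then 1 else if (k <= p)%N then 2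
  else if k == p.+1 then 3 else 4.

Definition nbrs (p j : nat) : seq nat :=
  if j == 0%N then iota 1 p else if j == 1%N then [:: 0; p.+1]
  else if (j <= p)%N then [:: 0%N] else if j == p.+1 then [:: 1; p.+2; p.+3]
  else if j == p.+2 then [:: p.+1; p.+3] else [:: p.+1; p.+2].

Variant vertex_class_spec (p : nat) : nat -> nat -> seq nat -> Prop :=
  | VCentre : vertex_class_spec p 0 0 (iota 1 p)
  | VLink : vertex_class_spec p 1 1 [:: 0; p.+1]
  | VPendant k of (2 <= k <= p)%N : vertex_class_spec p k 2 [:: 0%N]
  | VTriangleLink : vertex_class_spec p p.+1 3 [:: 1; p.+2; p.+3]
  | VTriangle1 : vertex_class_spec p p.+2 4 [:: p.+1; p.+3]
  | VTriangle2 : vertex_class_spec p p.+3 4 [:: p.+1; p.+2].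

Lemma part_pendant p (k : nat) : (2 <= k <= p)%N -> part p k = 2%N.
Proof. by move=> hk; rewrite /part; (repeat case: ifP => ?); lia. Qed.

Lemma part_triangle1 p : part p p.+2 = 4%N.
Proof. by rewrite /part; (repeat case: ifP => ?); lia. Qed.

Lemma part_triangle2 p : part p p.+3 = 4%N.
Proof. by rewrite /part; (repeat case: ifP => ?); lia. Qed.

Lemma nbrs_triangle1 p : nbrs p p.+2 = [:: p.+1; p.+3].
Proof. by rewrite /nbrs; (repeat case: ifP => ?) => //; exfalso; lia. Qed.

Lemma part_lt5 p k : (part p k < 5)%N.
Proof. by rewrite /part; repeat case: ifP. Qed.

Section Classes.
Variables (p : nat) (hp : (0 < p)%N).

(* Case analysis on a vertex of U'(p) (p >= 1 keeps vertex 1 a pendant). *)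

Lemma vertex_classP j : (j < p + 4)%N -> vertex_class_spec p j (part p j) (nbrs p j).
Proof.
move=> jlt; rewrite /part /nbrs.
have [->|j0] := eqVneq j 0%N; first exact: VCentre.
have [->|j1] := eqVneq j 1%N; first exact: VLink.
case: ifPn => jp; first by apply: VPendant; lia.
have [->|j2] := eqVneq j p.+1; first exact: VTriangleLink.
have [->|j3] := eqVneq j p.+2; first exact: VTriangle1.
have -> : j = p.+3 by lia.
exact: VTriangle2.
Qed.

(* For p = 0 the vertex 1 = p + 1 would be the triangle vertex. *)
Lemma part_triangle_link : part p p.+1 = 3%N.
Proof. by rewrite /part; (repeat case: ifP => ?); lia. Qed.

Lemma Uprime_nbrs (i j : 'I_(p + 4)) : Uprime p i j = ((i : nat) \in nbrs p j).
Proof.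
rewrite /Uprime /Uprime_edge0.
case: (vertex_classP (ltn_ord j)) => [||k hk|||]; rewrite ?mem_iota ?inE; lia.
Qed.

End Classes.

(* The quotient matrix Q of the partition, for p%:R = P: entry (k, l) counts the
   neighbours in class k (in U'(p)^c) of a vertex of class l. *)
Definition quot_rows (R : nzRingType) (P : R) : seq (seq R) :=
  [:: [:: 0; 0;     0;     1;     1];
      [:: 0; 0;     1;     0;     1];
      [:: 0; P - 1; P - 2; P - 1; P - 1];
      [:: 1; 0;     1;     0;     0];
      [:: 2; 2;     2;     0;     0]].

Definition quot_entry (R : nzRingType) (P : R) (k l : nat) : R :=
  nth 0 (nth [::] (quot_rows P) k) l.

Definition quot_apply (R : nzRingType) (P : R) (xs : nat -> R) (l : nat) : R :=
  \sum_(k < 5) xs k * quot_entry P k l.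

Definition lift_row (R : nzRingType) (p : nat) (xs : nat -> R) : 'rV[R]_(p + 4) :=
  \row_(i < p + 4) xs (part p i).

Section Equitable.
Variables (p : nat) (hp : (0 < p)%N) (R : comNzRingType).
Local Notation P := (p%:R : R).
Local Notation Ac := (adj_mx R (compl_graph (Uprime p))).

Lemma Uprime_irr : irreflexive (Uprime p).
Proof. by move=> i; rewrite /Uprime /Uprime_edge0; lia. Qed.

Lemma nbrs_uniq j : (j < p + 4)%N -> uniq (nbrs p j).
Proof.
by case/(vertex_classP hp) => [||k hk|||]; rewrite /= ?iota_uniq ?inE; lia.
Qed.

Lemma nbrs_bound j : (j < p + 4)%N -> all (gtn (p + 4)) (nbrs p j).
Proof.
case/(vertex_classP hp) => [||k hk|||]; rewrite /= ?andbT; try lia.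
by apply/allP => k; rewrite mem_iota /=; lia.
Qed.

Lemma compl_row_eq (F : nat -> R) (j : 'I_(p + 4)) :
  (\row_(i < p + 4) F i *m Ac) 0 j =
  \sum_(i < p + 4) F i - F j - \sum_(k <- nbrs p j) F k.
Proof.
have jlt := ltn_ord j.
rewrite -(row_mul_adj_nbrs F (nbrs_uniq jlt) (nbrs_bound jlt) (Uprime_nbrs hp ^~ j)).
rewrite adj_compl; last exact: Uprime_irr.
rewrite !mulmxBr mulmx1 !mxE; congr (_ - _ - _).
by apply: eq_bigr => i _; rewrite !mxE mulr1.
Qed.

Lemma sum_vertices (F : nat -> R) :
  \sum_(i < p + 4) F i =
  F 0%N + F 1%N + \sum_(2 <= k < p.+1) F k + F p.+1 + F p.+2 + F p.+3.
Proof.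
rewrite -(big_mkord xpredT) addn4 3?big_nat_recr // big_ltn // big_ltn //.
by rewrite /= !addrA.
Qed.

Lemma pendant_sum (xs : nat -> R) :
  \sum_(2 <= k < p.+1) xs (part p k) = (P - 1) * xs 2%N.
Proof.
rewrite (eq_big_nat _ _ (F2 := fun _ => xs 2%N)); last first.
  by move=> k hk; rewrite part_pendant //; lia.
by rewrite sumr_const_nat subSS -[xs 2%N *+ _]mulr_natl natrB.
Qed.

Lemma lift_sum (xs : nat -> R) :
  \sum_(i < p + 4) xs (part p i) =
  xs 0%N + xs 1%N + (P - 1) * xs 2%N + xs 3%N + 2 * xs 4%N.
Proof.
rewrite (sum_vertices (fun k => xs (part p k))) /= pendant_sum.
by rewrite (part_triangle_link hp) part_triangle1 part_triangle2; ring.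
Qed.

Lemma centre_nbr_sum (xs : nat -> R) :
  \sum_(k <- iota 1 p) xs (part p k) = xs 1%N + (P - 1) * xs 2%N.
Proof.
have -> : iota 1 p = 1%N :: index_iota 2 p.+1.
  by rewrite /index_iota subSS subn1 -{1}(prednK hp).
by rewrite big_cons pendant_sum.
Qed.

Lemma quot_applyE (xs : nat -> R) l :
  quot_apply P xs l = xs 0%N * quot_entry P 0 l + xs 1%N * quot_entry P 1 l
    + xs 2%N * quot_entry P 2 l + xs 3%N * quot_entry P 3 l + xs 4%N * quot_entry P 4 l.
Proof. by rewrite /quot_apply !big_ord_recl big_ord0 /bump /= addr0 !addrA. Qed.

Lemma lift_mul_compl (xs : nat -> R) :
  lift_row p xs *m Ac = lift_row p (quot_apply P xs).
Proof.
apply/rowP => j; rewrite /lift_row (compl_row_eq (fun k => xs (part p k))) /=.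
rewrite lift_sum mxE quot_applyE.
case: (vertex_classP hp (ltn_ord j)) => [||k hk|||].
all: rewrite ?centre_nbr_sum ?big_cons ?big_nil ?(part_pendant hk) ?(part_triangle_link hp).
all: rewrite ?part_triangle1 ?part_triangle2 /quot_entry /=; ring.
Qed.

End Equitable.

Definition quot_mx (R : nzRingType) (P : R) : 'M[R]_5 := seqmx 5 (quot_rows P).

Lemma horner_gpoly (R : rcfType) p (y : R) :
  (gpoly R p).[y] =
  (-4 + 2 * p%:R) + (3 - 5 * p%:R) * y + (6 - p%:R) * y ^+ 2
  + (1 + 4 * p%:R) * y ^+ 3 + (-2 + p%:R) * y ^+ 4 - y ^+ 5.
Proof. by rewrite /gpoly !hornerE. Qed.

Lemma det_quot (R : rcfType) p (y : R) :
  \det (quot_mx p%:R - y%:M) = (gpoly R p).[y].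
Proof.
set P : R := p%:R.
have -> : quot_mx P - y%:M = seqmx 5
    [:: [:: - y; 0;     0;         1;     1];
        [:: 0;   - y;   1;         0;     1];
        [:: 0;   P - 1; P - 2 - y; P - 1; P - 1];
        [:: 1;   0;     1;         - y;   0];
        [:: 2;   2;     2;         0;     - y]].
  apply/matrixP => i j; rewrite !mxE.
  by case: i j => [[|[|[|[|[|//]]]]] ?] [[|[|[|[|[|//]]]]] ?];
    rewrite /= ?mulr1n ?mulr0n ?subr0 ?sub0r.
do 5 rewrite !det_seqmx !big_ord_recl !big_ord0 /minor_seq /mkseq /bump /=
  ?mul0r ?add0r ?addr0.
by rewrite !det_mx00 horner_gpoly; ring.
Qed.

Lemma quot_eigenvalue (R : rcfType) p (y : R) :
  eigenvalue (quot_mx p%:R) y = root (gpoly R p) y.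
Proof.
rewrite /root -det_quot; apply/eigenvalueP/det0P => -[x].
  by move=> xQ x0; exists x; rewrite // mulmxBr xQ mul_mx_scalar subrr.
by move=> x0 /eqP; rewrite mulmxBr mul_mx_scalar subr_eq0 => /eqP xQ; exists x.
Qed.

Definition row5 (R : nzRingType) (xs : nat -> R) : 'rV[R]_5 := \row_(k < 5) xs k.

Lemma row5_mul_quot (R : nzRingType) (P : R) (xs : nat -> R) :
  row5 xs *m quot_mx P = row5 (quot_apply P xs).
Proof. by apply/rowP => l; rewrite !mxE; apply: eq_bigr => k _; rewrite !mxE. Qed.

Lemma row5_eq0 (R : nzRingType) p (xs : nat -> R) : row5 xs = 0 -> lift_row p xs = 0.
Proof.
move=> /rowP x0; apply/rowP => i; rewrite !mxE.
by have := x0 (Ordinal (part_lt5 p i)); rewrite !mxE.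
Qed.

Section Eigenvalues.
Variables (R : rcfType) (p : nat) (hp : (0 < p)%N).
Local Notation P := (p%:R : R).
Local Notation Ac := (adj_mx R (compl_graph (Uprime p))).

(* Every eigenvalue y < -2 of Q is an eigenvalue of U'(p)^c: the lift of an
   eigenvector of Q is an eigenvector, and it is nonzero because a vector
   vanishing on the nonempty classes 0, 1, 3, 4 has (y - P + 2) x_2 = 0. *)
Lemma compl_eigenvalue_of_quot (y : R) :
  y < -2 -> eigenvalue (quot_mx P) y -> eigenvalue Ac y.
Proof.
move=> ylt /eigenvalueP [x xQ x0]; apply/eigenvalueP.
pose xs k := x 0 (inord k).
have x_row5 : x = row5 xs by apply/rowP => k; rewrite mxE /xs inord_val.
rewrite x_row5 row5_mul_quot in xQ.
have quot_xs l : (l < 5)%N -> quot_apply P xs l = y * xs l.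
  by move=> hl; have := congr1 (fun w : 'rV[R]_5 => w 0 (Ordinal hl)) xQ; rewrite !mxE.
exists (lift_row p xs).
  by rewrite (lift_mul_compl hp); apply/rowP => j; rewrite !mxE quot_xs ?part_lt5.
apply: contra x0 => /eqP lift0.
have at_vertex i (hi : (i < p + 4)%N) : xs (part p i) = 0.
  by have := congr1 (fun w : 'rV[R]_(p + 4) => w 0 (Ordinal hi)) lift0; rewrite !mxE.
have h0 := at_vertex 0%N ltac:(lia).
have h1 := at_vertex 1%N ltac:(lia).
have h3 := at_vertex p.+1 ltac:(lia); rewrite (part_triangle_link hp) in h3.
have h4 := at_vertex p.+2 ltac:(lia); rewrite part_triangle1 in h4.
have h2 : xs 2%N = 0.
  have := quot_xs 2%N isT; rewrite quot_applyE /quot_entry /= h0 h1 h3 h4 => e2.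
  have : (y - (P - 2)) * xs 2%N = 0 by rewrite mulrBl -e2; ring.
  move/eqP; rewrite mulf_eq0 subr_eq0 => /orP[/eqP yP|/eqP //].
  by have := ler0n R p; lra.
rewrite x_row5; apply/eqP/rowP => k; rewrite !mxE.
by case: k => [[|[|[|[|[|//]]]]] ?] /=.
Qed.

Lemma compl_eigen_eq (F : nat -> R) (y : R) j :
  \row_(i < p + 4) F i *m Ac = y *: \row_(i < p + 4) F i -> (j < p + 4)%N ->
  y * F j = \sum_(i < p + 4) F i - F j - \sum_(k <- nbrs p j) F k.
Proof.
move=> eigF hj; have := congr1 (fun w : 'rV[R]_(p + 4) => w 0 (Ordinal hj)) eigF.
by rewrite (compl_row_eq hp) !mxE /= => ->.
Qed.

(* The candidate class values of a vertex vector F for the eigenvalue y; the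
   pendant value (sum F - F 0) / (y + 1) is forced by the eigenvalue equation
   and also makes sense when the pendant class 2..p is empty (p = 1). *)
Definition class_values (y : R) (F : nat -> R) : nat -> R :=
  nth 0 [:: F 0%N; F 1%N; (\sum_(i < p + 4) F i - F 0%N) / (y + 1); F p.+1; F p.+2].

Lemma eigenvector_lift (F : nat -> R) (y : R) : y < -2 ->
  \row_(i < p + 4) F i *m Ac = y *: \row_(i < p + 4) F i ->
  \row_(i < p + 4) F i = lift_row p (class_values y F).
Proof.
move=> ylt eigF; have y1 : y + 1 != 0 by apply/eqP; lra.
apply/rowP => i; rewrite !mxE; move: (compl_eigen_eq eigF (ltn_ord i)).
case: (vertex_classP hp (ltn_ord i)) => [||k hk|||]; rewrite /class_values //=.
  rewrite big_cons big_nil addr0 => ek.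
  set T := \sum_(i < p + 4) F i in ek *.
  have -> : T - F 0%N = (y + 1) * F k by rewrite mulrDl mul1r ek; ring.
  by rewrite mulrC mulKf.
rewrite !big_cons big_nil addr0 => e3.
have := compl_eigen_eq eigF (ltac:(lia) : (p.+2 < p + 4)%N).
rewrite nbrs_triangle1 !big_cons big_nil addr0 => e2.
have : y * (F p.+3 - F p.+2) = 0 by rewrite mulrBr e3 e2; ring.
by move/eqP; rewrite mulf_eq0 subr_eq0 => /orP[/eqP y0|/eqP]; first lra.
Qed.

(* The class values of such an eigenvector form an eigenvector of Q: at the
   classes 0, 1, 3, 4 this is read off the lifted equation at one vertex, at
   the (possibly empty) class 2 it follows from the choice of the value. *)
Lemma class_values_eigen (F : nat -> R) (y : R) (l : nat) : y < -2 ->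
  \row_(i < p + 4) F i *m Ac = y *: \row_(i < p + 4) F i -> (l < 5)%N ->
  quot_apply P (class_values y F) l = y * class_values y F l.
Proof.
move=> ylt eigF; set xs := class_values y F.
have F_lift := eigenvector_lift ylt eigF; rewrite -/xs in F_lift.
have lift_eig : lift_row p (quot_apply P xs) = lift_row p (fun k => y * xs k).
  by rewrite -(lift_mul_compl hp) -F_lift eigF F_lift; apply/rowP => i; rewrite !mxE.
have at_vertex i (hi : (i < p + 4)%N) :
    quot_apply P xs (part p i) = y * xs (part p i).
  by have := congr1 (fun w : 'rV[R]_(p + 4) => w 0 (Ordinal hi)) lift_eig; rewrite !mxE.
case: l => [|[|[|[|[|//]]]]] _.
- exact: (at_vertex 0%N ltac:(lia)).
- exact: (at_vertex 1%N ltac:(lia)).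
- set T := \sum_(i < p + 4) F i.
  have T_lift : T = xs 0%N + xs 1%N + (P - 1) * xs 2%N + xs 3%N + 2 * xs 4%N.
    rewrite -(lift_sum hp); apply: eq_bigr => i _.
    by have := congr1 (fun w : 'rV[R]_(p + 4) => w 0 i) F_lift; rewrite !mxE.
  have y1 : y + 1 != 0 by apply/eqP; lra.
  have xs2 : xs 2%N * (y + 1) = T - xs 0%N by rewrite /xs /class_values /= divfK.
  rewrite quot_applyE /quot_entry /=.
  have -> : y * xs 2%N = xs 2%N * (y + 1) - xs 2%N by ring.
  by rewrite xs2 T_lift; ring.
- by have := at_vertex p.+1 ltac:(lia); rewrite (part_triangle_link hp).
- by have := at_vertex p.+2 ltac:(lia); rewrite part_triangle1.
Qed.

Lemma quot_eigenvalue_of_compl (y : R) :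
  y < -2 -> eigenvalue Ac y -> eigenvalue (quot_mx P) y.
Proof.
move=> ylt /eigenvalueP [v vA v0]; apply/eigenvalueP.
have [F vF] := row_natfun v; rewrite {v}vF in vA v0.
exists (row5 (class_values y F)).
  rewrite row5_mul_quot; apply/rowP => l; rewrite !mxE.
  exact: class_values_eigen.
by apply: contra v0 => /eqP /row5_eq0 x0; rewrite (eigenvector_lift ylt vA) x0.
Qed.

End Eigenvalues.

(* g changes sign on [-5, -2]: g(-5) = 1881 + 127 p and g(-2) = 6 - 8 p. *)
Lemma gpoly_sign_change (R : rcfType) p : (0 < p)%N ->
  0 < (gpoly R p).[-5] /\ (gpoly R p).[-2] < 0.
Proof.
move=> hp; have P1 : 1 <= (p%:R : R) by rewrite ler1n.
by rewrite !horner_gpoly; split; lra.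
Qed.

Lemma gpoly_least_root (R : rcfType) p : (0 < p)%N ->
  exists x : R, is_least_root (gpoly R p) x /\ x < -2.
Proof.
move=> hp; have [g_neg5 g_neg2] := gpoly_sign_change R hp.
have g0 : gpoly R p != 0 by apply: contraTneq g_neg2 => ->; rewrite horner0 ltxx.
have [z z_itv rz] : {z | z \in `]-5, -2[ & root (gpoly R p) z}.
  by apply: poly_ivtoo; rewrite ?(pmulr_rlt0 _ g_neg5) //; lra.
have [x [rx x_least]] := least_root_exists g0 rz.
exists x; split => //; apply: (le_lt_trans (x_least z rz)).
by move: z_itv; rewrite in_itv => /andP[].
Qed.

Unset Implicit Arguments.

Theorem mainTheorem8 (R : rcfType) (p : nat) (hp : (1 <= p)%N) :
  exists x : R,
    is_lambda_min (adj_mx R (compl_graph (Uprime p))) x /\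
    is_least_root (gpoly R p) x.
Proof.
have [x [[rx x_least] xlt]] := gpoly_least_root R hp.
exists x; split; last by split.
split; first by apply: (compl_eigenvalue_of_quot hp xlt); rewrite quot_eigenvalue.
move=> y ey; have [ylt|yge] := ltP y (-2); last by apply: ltW; apply: lt_le_trans yge.
by apply: x_least; rewrite -quot_eigenvalue; exact: (quot_eigenvalue_of_compl hp ylt ey).
Qed.
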